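(* Suppose $|\Omega| = |A| = 2$. Let $\Sigma$ be a canonical ambiguous experiment (a nonempty closed convex set of maps $\sigma: \Omega \to \Delta(A)$) with $\tau^{*} \in BR(\Sigma)$. Then there exists $\sigma \in \Sigma$ with $\tau^{*} \in BR(\sigma)$.
   Context: Setting: $\Omega$ is a finite set of states, $A$ a finite set of receiver actions. Sender and receiver share a set of priors $P \subseteq \Delta(\Omega)$, nonempty, closed and convex; the receiver has maxmin expected utility preferences with payoff $u_r : A \times \Omega \to \mathbb{R}$. A canonical experiment is a map $\sigma: \Omega \to \Delta(A)$, written $\sigma(a\mid\omega)$. A receiver strategy is $\tau: A \to \Delta(A)$. For $p \in P$, $u_r(p,\sigma,\tau) = \sum_{\omega,m,a} p(\omega)\sigma(m\mid\omega)\tau(a\mid m)u_r(a,\omega)$ and $u_r(\sigma,\tau) = \min_{p\in P} u_r(p,\sigma,\tau)$. For a canonical ambiguous experiment $\Sigma$, $U_r(\Sigma,\tau) = \min_{\sigma \in \Sigma} u_r(\sigma,\tau)$. Best responses: $BR(\sigma) = \arg\max_{\tau} u_r(\sigma,\tau)$ and $BR(\Sigma) = \arg\max_{\tau} U_r(\Sigma,\tau)$, over all $\tau: A \to \Delta(A)$. The obedient strategy $\tau^{*}$ is $\tau^{*}(a\mid a)=1$ for all $a \in A$. *)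

From HB Require Import structures.
From mathcomp Require Import all_boot all_order all_algebra.
From mathcomp Require Import all_classical all_reals all_analysis.
Set Implicit Arguments. Unset Strict Implicit. Unset Printing Implicit Defensive.
Import Order.TTheory GRing.Theory Num.Theory.
Local Open Scope ring_scope.
Local Open Scope classical_set_scope.

Definition is_dist (R : realType) (T : finType) (q : T -> R) : Prop :=
  (forall t, 0 <= q t) /\ \sum_(t : T) q t = 1.

Definition convex_fun_set (R : realType) (T : Type) (S : set (T -> R)) : Prop :=
  forall f g, S f -> S g -> forall t : R, 0 <= t <= 1 ->
    S (fun x => t * f x + (1 - t) * g x).

Definition convex_fun2_set (R : realType) (T U : Type) (S : set (T -> U -> R)) : Prop :=
  forall f g, S f -> S g -> forall t : R, 0 <= t <= 1 ->
    S (fun x y => t * f x y + (1 - t) * g x y).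

(* canonical experiment sigma : Omega -> Delta(A), sigma w m = sigma(m|w) *)
Definition is_experiment (R : realType) (Om A : finType) (s : Om -> A -> R) : Prop :=
  forall w, is_dist (s w).

(* receiver strategy tau : A -> Delta(A), tau m a = tau(a|m) *)
Definition is_strategy (R : realType) (A : finType) (tau : A -> A -> R) : Prop :=
  forall m, is_dist (tau m).

Definition ur_p (R : realType) (Om A : finType) (ur : A -> Om -> R)
  (p : Om -> R) (s : Om -> A -> R) (tau : A -> A -> R) : R :=
  \sum_(w : Om) \sum_(m : A) \sum_(a : A) p w * s w m * tau m a * ur a w.

(* u_r(sigma, tau) = min_{p in P} u_r(p, sigma, tau)
   (P is nonempty and compact, so the infimum is attained). *)
Definition ur_sigma (R : realType) (Om A : finType) (P : set (Om -> R))
  (ur : A -> Om -> R) (s : Om -> A -> R) (tau : A -> A -> R) : R :=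
  inf [set ur_p ur p s tau | p in P].

Definition Ur_Sigma (R : realType) (Om A : finType) (P : set (Om -> R))
  (ur : A -> Om -> R) (Sg : set (Om -> A -> R)) (tau : A -> A -> R) : R :=
  inf [set ur_sigma P ur s tau | s in Sg].

Definition BR_sigma (R : realType) (Om A : finType) (P : set (Om -> R))
  (ur : A -> Om -> R) (s : Om -> A -> R) (tau : A -> A -> R) : Prop :=
  is_strategy tau /\
  forall tau', is_strategy tau' -> ur_sigma P ur s tau' <= ur_sigma P ur s tau.

Definition BR_Sigma (R : realType) (Om A : finType) (P : set (Om -> R))
  (ur : A -> Om -> R) (Sg : set (Om -> A -> R)) (tau : A -> A -> R) : Prop :=
  is_strategy tau /\
  forall tau', is_strategy tau' -> Ur_Sigma P ur Sg tau' <= Ur_Sigma P ur Sg tau.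

Definition obedient (R : realType) (A : finType) : A -> A -> R :=
  fun m a => if a == m then 1 else 0.

From HB Require Import structures.
From mathcomp Require Import all_boot all_order all_algebra.
From mathcomp Require Import all_classical all_reals all_analysis.
From mathcomp Require Import ring lra.
Import Order.TTheory GRing.Theory Num.Theory.
Set Implicit Arguments. Unset Strict Implicit. Unset Printing Implicit Defensive.
Local Open Scope ring_scope.
Local Open Scope classical_set_scope.

(** Fix actions a0, a1 and states w0, w1, and read a prior as pi = p(w1), an
   experiment as x_j = sigma(a0|w_j) and a strategy as a = tau(a0|a0),
   b = tau(a0|a1).  The receiver's payoff is affine in pi, so u_r(sigma, tau)
   is the smaller of the payoffs at the extreme priors lo and hi, and every
   strategy earns the payoff of obedience plus a nonnegative multiple of the
   gain of some message-ignoring strategy over obedience.  If some sigma in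
   Sigma gives obedience the same payoff under lo and hi, then obedience beats
   every message-ignoring strategy at sigma, hence is a best reply there.
   Otherwise, since these payoffs are affine in sigma and Sigma is convex, one
   extreme prior is strictly worse for obedience on all of Sigma; let sigma
   maximise obedience's payoff under it (Sigma is compact).  Either that payoff
   dominates the message-ignoring payoffs and obedience is a best reply at
   sigma, or tilting obedience slightly towards a message-ignoring strategy
   strictly raises U_r(Sigma, .), contradicting tau* in BR(Sigma). *)

Lemma card2_cover (T : finType) : #|T| = 2%N ->
  exists x y : T, x != y /\ forall t, t = x \/ t = y.
Proof.
move=> T2; have := enum_uniq T; rewrite cardE in T2.
case E: (enum T) T2 => [|x [|y [|z s]]] //= _; rewrite inE andbT => xy.
exists x, y; split => // t; have : t \in enum T by rewrite mem_enum.
by rewrite E !inE => /orP[/eqP->|/eqP->]; [left|right].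
Qed.

Section TwoElements.
Variables (T : finType) (x y : T).
Hypotheses (xy : x != y) (T_cover : forall t, t = x \/ t = y).

Lemma sum_cover2 (V : nmodType) (F : T -> V) : \sum_t F t = F x + F y.
Proof.
rewrite (bigD1 x) //= (bigD1 y) 1?eq_sym //= big1 ?addr0 // => t /andP[tx ty].
by case: (T_cover t) => et; rewrite et eqxx in tx ty.
Qed.

Lemma is_dist_cover2 (R : realType) (q : T -> R) :
  is_dist q -> q y = 1 - q x /\ forall t, 0 <= q t <= 1.
Proof.
move=> [q_ge0]; rewrite sum_cover2 => q1; split; first lra.
by move=> t; have := q_ge0 x; have := q_ge0 y; case: (T_cover t) => ->; lra.
Qed.

End TwoElements.

Lemma obedient_strategy (R : realType) (A : finType) : is_strategy (@obedient R A).
Proof.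
move=> m; split=> [a|]; first by rewrite /obedient; case: (a == m); lra.
by rewrite /obedient (bigD1 m) //= eqxx big1 ?addr0 // => a /negbTE ->.
Qed.

Section ExperimentCompactness.
Import numFieldNormedType.Exports ArrowAsProduct.
Variables (R : realType) (Om A : finType) (Sg : set (Om -> A -> R)).
Hypotheses (Sg0 : Sg !=set0) (Sg01 : forall s, Sg s -> forall w a, 0 <= s w a <= 1).
Hypothesis Sg_closed : closed (Sg : set {ptws Om -> {ptws A -> R^o}}).

Lemma experiments_compact : compact (Sg : set (Om -> A -> R^o)).
Proof.
pose unit_cube (X : Type) := [set g : X -> R^o | forall x, `[0, 1] (g x)].
have cube_compact : compact (unit_cube A).
  exact: (@tychonoff A (fun _ => R^o) (fun _ => `[0, 1]) (fun _ => @segment_compact R 0 1)).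
have : compact [set f : Om -> A -> R^o | forall w, unit_cube A (f w)].
  exact: (@tychonoff Om (fun _ => A -> R^o) (fun _ => unit_cube A) (fun _ => cube_compact)).
move/(subclosed_compact Sg_closed); apply => s Hs w a /=.
by have := Sg01 Hs w a; rewrite in_itv.
Qed.

Lemma experiments_argmin w0 w1 a (q0 q1 : R) : exists2 s, Sg s &
  forall s', Sg s' -> q0 * s w0 a + q1 * s w1 a <= q0 * s' w0 a + q1 * s' w1 a.
Proof.
have coord_cont w : continuous (fun s : Om -> A -> R^o => (s w a : R)).
  move=> s; exact: (continuous_comp (@proj_continuous Om (fun _ => {ptws A -> R^o}) w s)
                                    (@proj_continuous A (fun _ => R) a (s w))).
have f_cont : continuous (fun s : Om -> A -> R^o => (q0 * s w0 a + q1 * s w1 a : R)).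
  move=> s; exact: cvgD (cvgM (cvg_cst q0) (coord_cont w0 s))
                        (cvgM (cvg_cst q1) (coord_cont w1 s)).
have [s Hs s_min] := compact_EVT_min Sg0 experiments_compact (continuous_subspaceT f_cont).
by exists s => [|s' Hs']; [rewrite inE in Hs | apply: s_min; rewrite inE].
Qed.

End ExperimentCompactness.

Section InfAffine.
Variables (R : realType) (E : set R) (al be : R).
Hypotheses (E0 : E !=set0) (E_lb : has_lbound E) (E_ub : has_ubound E).

Let img_nonempty : [set al + be * x | x in E] !=set0.
Proof. by case: E0 => x Ex; exists (al + be * x), x. Qed.

Lemma inf_affine_ge0 : 0 <= be -> inf [set al + be * x | x in E] = al + be * inf E.
Proof.
move=> be_ge0.
have lb : lbound [set al + be * x | x in E] (al + be * inf E).
  by move=> _ [x Ex <-]; rewrite lerD2l ler_wpM2l // ge_inf.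
apply/le_anti; rewrite lb_le_inf // andbT; apply/ler_addgt0Pr => e e_gt0.
have e'_gt0 : 0 < e / (be + 1) by rewrite divr_gt0 //; lra.
have e'E : e / (be + 1) * (be + 1) = e by field; lra.
have [x Ex x_lt] := inf_adherent e'_gt0 (conj E0 E_lb).
apply: le_trans (ge_inf (ex_intro _ _ lb) (imageP _ Ex)) _.
have : be * x <= be * (inf E + e / (be + 1)) by rewrite ler_wpM2l // ltW.
nra.
Qed.

Lemma inf_affine_le0 : be <= 0 -> inf [set al + be * x | x in E] = al + be * sup E.
Proof.
move=> be_le0.
have lb : lbound [set al + be * x | x in E] (al + be * sup E).
  by move=> _ [x Ex <-]; rewrite lerD2l ler_wnM2l // sup_upper_bound.
apply/le_anti; rewrite lb_le_inf // andbT; apply/ler_addgt0Pr => e e_gt0.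
have e'_gt0 : 0 < e / (1 - be) by rewrite divr_gt0 //; lra.
have e'E : e / (1 - be) * (1 - be) = e by field; lra.
have [x Ex x_gt] := sup_adherent e'_gt0 (conj E0 E_ub).
apply: le_trans (ge_inf (ex_intro _ _ lb) (imageP _ Ex)) _.
have : be * x <= be * (sup E - e / (1 - be)) by rewrite ler_wnM2l // ltW.
nra.
Qed.

Lemma inf_affine :
  inf [set al + be * x | x in E] = Num.min (al + be * inf E) (al + be * sup E).
Proof.
have [x Ex] := E0.
have inf_le_sup : inf E <= sup E.
  exact: le_trans (ge_inf E_lb Ex) (sup_upper_bound (conj E0 E_ub) Ex).
have [be_ge0|be_lt0] := leP 0 be.
  by rewrite inf_affine_ge0 //; apply/esym/min_idPl; rewrite lerD2l; apply: ler_wpM2l.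
rewrite inf_affine_le0 ?ltW //; apply/esym/min_idPr.
by rewrite lerD2l; apply: ler_wnM2l => //; exact: ltW.
Qed.

End InfAffine.

Section Payoff.
Variables (R : realType) (u00 u10 u01 u11 : R).

(* [uij] is u_r(a_i, w_j), and [b + (a - b) * xj] is the probability of
   playing a0 in state w_j. *)
Definition payoff (pi x0 x1 a b : R) : R :=
  (1 - pi) * (u10 + (u00 - u10) * (b + (a - b) * x0)) +
  pi * (u11 + (u01 - u11) * (b + (a - b) * x1)).

Definition uninformed (pi t : R) : R :=
  (1 - pi) * (u10 + (u00 - u10) * t) + pi * (u11 + (u01 - u11) * t).

Lemma payoff_diag pi x0 x1 t : payoff pi x0 x1 t t = uninformed pi t.
Proof. by rewrite /payoff /uninformed; ring. Qed.

Lemma payoff_prior_affine pi x0 x1 a b :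
  payoff pi x0 x1 a b =
  payoff 0 x0 x1 a b + (payoff 1 x0 x1 a b - payoff 0 x0 x1 a b) * pi.
Proof. by rewrite /payoff; ring. Qed.

Lemma payoff_obedientE pi x0 x1 :
  payoff pi x0 x1 1 0 =
  uninformed pi 0 + (1 - pi) * (u00 - u10) * x0 + pi * (u01 - u11) * x1.
Proof. by rewrite /payoff /uninformed; ring. Qed.

Lemma payoff_obedient_convex pi x0 x1 y0 y1 t :
  payoff pi (t * x0 + (1 - t) * y0) (t * x1 + (1 - t) * y1) 1 0 =
  t * payoff pi x0 x1 1 0 + (1 - t) * payoff pi y0 y1 1 0.
Proof. by rewrite /payoff; ring. Qed.

Lemma payoff_tilt pi x0 x1 e t :
  payoff pi x0 x1 (1 - e + e * t) (e * t) =
  (1 - e) * payoff pi x0 x1 1 0 + e * uninformed pi t.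
Proof. by rewrite /payoff /uninformed; ring. Qed.

Lemma payoff_deviation a b : 0 <= a <= 1 -> 0 <= b <= 1 ->
  exists k t, [/\ 0 <= k, 0 <= t <= 1 & forall pi x0 x1,
    payoff pi x0 x1 a b =
    payoff pi x0 x1 1 0 + k * (uninformed pi t - payoff pi x0 x1 1 0)].
Proof.
move=> /andP[a0 a1] /andP[b0 b1].
have [ab1|ab1] := eqVneq (a - b) 1.
  have [-> ->] : a = 1 /\ b = 0 by split; lra.
  by exists 0, 0; split => // [|pi x0 x1]; [lra | rewrite mul0r addr0].
have k_gt0 : 0 < 1 - (a - b) by rewrite subr_gt0 lt_neqAle ab1 /=; lra.
exists (1 - (a - b)), (b / (1 - (a - b))); split; first exact: ltW.
  by rewrite divr_ge0 ?ler_pdivrMr ?mul1r //=; lra.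
move=> pi x0 x1; rewrite /payoff /uninformed; field; exact: lt0r_neq0.
Qed.

Lemma uninformed_le_max pi t : 0 <= t <= 1 ->
  uninformed pi t <= Num.max (uninformed pi 0) (uninformed pi 1).
Proof.
move=> /andP[t0 t1].
have -> : uninformed pi t = (1 - t) * uninformed pi 0 + t * uninformed pi 1.
  by rewrite /uninformed; ring.
have : uninformed pi 0 <= Num.max (uninformed pi 0) (uninformed pi 1).
  by rewrite le_max lexx.
have : uninformed pi 1 <= Num.max (uninformed pi 0) (uninformed pi 1).
  by rewrite le_max lexx orbT.
nra.
Qed.

Lemma payoff_ge pi x0 x1 a b :
  0 <= pi <= 1 -> 0 <= x0 <= 1 -> 0 <= x1 <= 1 -> 0 <= a <= 1 -> 0 <= b <= 1 ->
  - (`|u00| + `|u10| + `|u01| + `|u11|) <= payoff pi x0 x1 a b.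
Proof.
move=> /andP[p0 p1] /andP[x00 x01] /andP[x10 x11] /andP[a0 a1] /andP[b0 b1].
have mix_ge (u v q : R) : 0 <= q <= 1 -> - (`|u| + `|v|) <= v + (u - v) * q.
  move=> /andP[q0 q1].
  have := ler_norm u; have := ler_norm (- u); rewrite normrN.
  have := ler_norm v; have := ler_norm (- v); rewrite normrN.
  nra.
have /(mix_ge u00 u10) m0 : 0 <= b + (a - b) * x0 <= 1 by apply/andP; split; nra.
have /(mix_ge u01 u11) m1 : 0 <= b + (a - b) * x1 <= 1 by apply/andP; split; nra.
rewrite /payoff; set A0 := u10 + _ in m0 *; set A1 := u11 + _ in m1 *.
have : 0 <= (1 - pi) * (A0 + (`|u00| + `|u10|)) by apply: mulr_ge0; lra.
have : 0 <= pi * (A1 + (`|u01| + `|u11|)) by apply: mulr_ge0; lra.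
have := normr_ge0 u00; have := normr_ge0 u10.
have := normr_ge0 u01; have := normr_ge0 u11.
nra.
Qed.

Definition worst (pA pB x0 x1 a b : R) : R :=
  Num.min (payoff pA x0 x1 a b) (payoff pB x0 x1 a b).

Lemma worstC pA pB x0 x1 a b : worst pA pB x0 x1 a b = worst pB pA x0 x1 a b.
Proof. exact: minC. Qed.

Section ExperimentSet.
Variables (T : Type) (Sg : set T) (X0 X1 : T -> R).
Hypotheses (Sg0 : Sg !=set0)
  (X0_01 : forall s, Sg s -> 0 <= X0 s <= 1) (X1_01 : forall s, Sg s -> 0 <= X1 s <= 1).
Hypothesis Sg_convex : forall s1 s2, Sg s1 -> Sg s2 -> forall t, 0 <= t <= 1 ->
  exists2 s, Sg s &
    X0 s = t * X0 s1 + (1 - t) * X0 s2 /\ X1 s = t * X1 s1 + (1 - t) * X1 s2.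
Hypothesis Sg_argmin : forall q0 q1 : R, exists2 s, Sg s &
  forall s', Sg s' -> q0 * X0 s + q1 * X1 s <= q0 * X0 s' + q1 * X1 s'.

Local Notation obey pi s := (payoff pi (X0 s) (X1 s) 1 0).

Definition value (pA pB a b : R) : R :=
  inf [set worst pA pB (X0 s) (X1 s) a b | s in Sg].

Lemma valueC pA pB a b : value pA pB a b = value pB pA a b.
Proof. by rewrite /value; under eq_imagel => s _ do rewrite worstC. Qed.

Lemma payoff_obedient_argmin pi :
  exists2 s, Sg s & forall s', Sg s' -> obey pi s <= obey pi s'.
Proof.
have [s Hs s_min] := Sg_argmin ((1 - pi) * (u00 - u10)) (pi * (u01 - u11)).
by exists s => // s' Hs'; rewrite !payoff_obedientE; have := s_min _ Hs'; lra.
Qed.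

Lemma payoff_obedient_argmax pi :
  exists2 s, Sg s & forall s', Sg s' -> obey pi s' <= obey pi s.
Proof.
have [s Hs s_min] := Sg_argmin (- ((1 - pi) * (u00 - u10))) (- (pi * (u01 - u11))).
by exists s => // s' Hs'; rewrite !payoff_obedientE; have := s_min _ Hs'; lra.
Qed.

Lemma exists_payoff_obedient_eq pA pB s1 s2 : Sg s1 -> Sg s2 ->
  obey pA s1 < obey pB s1 -> obey pB s2 < obey pA s2 ->
  exists2 s, Sg s & obey pA s = obey pB s.
Proof.
move=> H1 H2 lt1 lt2.
set d1 := obey pB s1 - obey pA s1; set d2 := obey pB s2 - obey pA s2.
have d1_gt0 : 0 < d1 by rewrite /d1; lra.
have d2_lt0 : d2 < 0 by rewrite /d2; lra.
have ht : 0 <= d2 / (d2 - d1) <= 1.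
  rewrite -mulrNN -invrN; apply/andP; split.
    by rewrite divr_ge0 //; lra.
  by rewrite ler_pdivrMr; lra.
have [s Hs [X0s X1s]] := Sg_convex H1 H2 ht.
exists s => //; rewrite X0s X1s; apply/eqP; rewrite -subr_eq0 !payoff_obedient_convex.
rewrite /d1 /d2 in d1_gt0 d2_lt0 *; apply/eqP; field; apply/eqP; lra.
Qed.

Section Comparison.
Variables pA pB : R.
Hypotheses (pA01 : 0 <= pA <= 1) (pB01 : 0 <= pB <= 1).
Hypothesis obedient_best : forall a b, 0 <= a <= 1 -> 0 <= b <= 1 ->
  value pA pB a b <= value pA pB 1 0.

Let one_in01 : 0 <= (1 : R) <= 1. Proof. by rewrite lexx ler01. Qed.
Let zero_in01 : 0 <= (0 : R) <= 1. Proof. by rewrite lexx ler01. Qed.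

Lemma value_le_worst a b s : 0 <= a <= 1 -> 0 <= b <= 1 -> Sg s ->
  value pA pB a b <= worst pA pB (X0 s) (X1 s) a b.
Proof.
move=> ha hb Hs; apply: ge_inf; last by exists s.
exists (- (`|u00| + `|u10| + `|u01| + `|u11|)) => _ [s' Hs' <-].
by rewrite /worst le_min !payoff_ge ?X0_01 ?X1_01.
Qed.

Lemma value_diag t : value pA pB t t = Num.min (uninformed pA t) (uninformed pB t).
Proof.
rewrite /value /worst; under eq_imagel => s _ do rewrite !payoff_diag.
have [s0 Hs0] := Sg0; rewrite -[RHS]inf1; congr inf.
by apply/seteqP; split => [_ [s _ <-] // | _ ->]; exists s0.
Qed.

Lemma obedient_opt_of_eq s : Sg s -> obey pA s = obey pB s ->
  forall a b, 0 <= a <= 1 -> 0 <= b <= 1 ->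
  worst pA pB (X0 s) (X1 s) a b <= worst pA pB (X0 s) (X1 s) 1 0.
Proof.
move=> Hs Heq a b ha hb.
have [k [t [k_ge0 ht Hdev]]] := payoff_deviation ha hb.
have value_le : value pA pB 1 0 <= obey pA s.
  by have := value_le_worst one_in01 zero_in01 Hs; rewrite /worst Heq minxx.
have improve pi : uninformed pi t <= obey pi s -> payoff pi (X0 s) (X1 s) a b <= obey pi s.
  by rewrite Hdev; nra.
have := obedient_best ht ht; rewrite value_diag ge_min => /orP[hA|hB]; rewrite /worst ge_min.
  by rewrite -Heq minxx improve //; apply: le_trans value_le.
by rewrite Heq minxx improve ?orbT // -Heq; apply: le_trans value_le.
Qed.

Lemma value_lt_tilt t : (forall s, Sg s -> obey pA s < obey pB s) -> 0 <= t <= 1 ->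
  value pA pB 1 0 < uninformed pA t ->
  exists2 e, 0 <= e <= 1 & value pA pB 1 0 < value pA pB (1 - e + e * t) (e * t).
Proof.
move=> Hlt ht gapA.
set m := value pA pB 1 0 in gapA *.
have m_le s : Sg s -> m <= obey pA s.
  move=> Hs; have := value_le_worst one_in01 zero_in01 Hs.
  by rewrite /worst (min_idPl (ltW (Hlt _ Hs))).
have [sb Hsb sb_min] := payoff_obedient_argmin pB.
set VB := obey pB sb in sb_min.
have gapB : m < VB := le_lt_trans (m_le _ Hsb) (Hlt _ Hsb).
(* The tilt weight [e] is small enough that prior [pB] still gets at least
   [(m + VB) / 2], and prior [pA] gains [e * (uninformed pA t - m)]. *)
set d := VB - uninformed pB t.
pose e := (VB - m) / (2 * (`|d| + (VB - m))).
have d_pos : 0 < `|d| + (VB - m) by have := normr_ge0 d; lra.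
have e_gt0 : 0 < e by rewrite divr_gt0 //; lra.
have e_mul : e * (`|d| + (VB - m)) = (VB - m) / 2 by rewrite /e; field; lra.
have e_le_half : e <= 1 / 2 by have := normr_ge0 d; nra.
have ed : e * d <= (VB - m) / 2 by have := ler_norm d; nra.
exists e; first by apply/andP; split; lra.
pose delta := Num.min (e * (uninformed pA t - m)) ((VB - m) / 2).
have delta_gt0 : 0 < delta by rewrite lt_min; apply/andP; split; nra.
apply: (@lt_le_trans _ _ (m + delta)); first lra.
have [s0 Hs0] := Sg0.
apply: lb_le_inf => [|_ [s Hs <-]]; first by exists (worst pA pB (X0 s0) (X1 s0)
  (1 - e + e * t) (e * t)), s0.
rewrite /worst le_min !payoff_tilt; apply/andP; split.
  have : delta <= e * (uninformed pA t - m) by rewrite ge_min lexx.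
  by have := m_le _ Hs; nra.
have : delta <= (VB - m) / 2 by rewrite ge_min lexx orbT.
by have := sb_min _ Hs; rewrite /d in ed; nra.
Qed.

Lemma exists_obedient_opt_of_lt : (forall s, Sg s -> obey pA s < obey pB s) ->
  exists2 s, Sg s & forall a b, 0 <= a <= 1 -> 0 <= b <= 1 ->
    worst pA pB (X0 s) (X1 s) a b <= worst pA pB (X0 s) (X1 s) 1 0.
Proof.
move=> Hlt.
have [ss Hss ss_max] := payoff_obedient_argmax pA.
have worst_ss : worst pA pB (X0 ss) (X1 ss) 1 0 = obey pA ss.
  exact/min_idPl/ltW/Hlt.
have [Mle|Mgt] := leP (Num.max (uninformed pA 0) (uninformed pA 1)) (obey pA ss).
  exists ss => // a b ha hb.
  have [k [t [k_ge0 ht Hdev]]] := payoff_deviation ha hb.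
  rewrite worst_ss /worst ge_min Hdev; apply/orP; left.
  by have := le_trans (uninformed_le_max pA ht) Mle; nra.
have [t0 ht0 Ut0] : exists2 t0, 0 <= t0 <= 1 &
    uninformed pA t0 = Num.max (uninformed pA 0) (uninformed pA 1).
  case: (leP (uninformed pA 0) (uninformed pA 1)) => h.
    by exists 1 => //; apply/esym/max_idPr.
  by exists 0 => //; apply/esym/max_idPl/ltW.
have gapA : value pA pB 1 0 < uninformed pA t0.
  rewrite Ut0; apply: le_lt_trans Mgt; rewrite -worst_ss.
  exact: value_le_worst.
have [e /andP[e0 e1] +] := value_lt_tilt Hlt ht0 gapA.
rewrite ltNge obedient_best //; apply/andP; split; case/andP: ht0 => ? ?; nra.
Qed.

End Comparison.

Lemma exists_obedient_best lo hi : 0 <= lo <= 1 -> 0 <= hi <= 1 ->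
  (forall a b, 0 <= a <= 1 -> 0 <= b <= 1 -> value lo hi a b <= value lo hi 1 0) ->
  exists2 s, Sg s & forall a b, 0 <= a <= 1 -> 0 <= b <= 1 ->
    worst lo hi (X0 s) (X1 s) a b <= worst lo hi (X0 s) (X1 s) 1 0.
Proof.
move=> lo01 hi01 obedient_best.
have [[s Hs Heq]|Hne] := pselect (exists2 s, Sg s & obey lo s = obey hi s).
  by exists s => //; apply: obedient_opt_of_eq.
have [[s1 H1 lt1]|Hnlt] := pselect (exists2 s, Sg s & obey lo s < obey hi s).
  have [[s2 H2 lt2]|Hngt] := pselect (exists2 s, Sg s & obey hi s < obey lo s).
    by case: Hne; apply: exists_payoff_obedient_eq H1 H2 lt1 lt2.
  apply: exists_obedient_opt_of_lt => // s Hs.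
  by case: ltgtP => // h; [case: Hngt | case: Hne]; exists s.
have [s Hs s_opt] : exists2 s, Sg s & forall a b, 0 <= a <= 1 -> 0 <= b <= 1 ->
    worst hi lo (X0 s) (X1 s) a b <= worst hi lo (X0 s) (X1 s) 1 0.
  apply: exists_obedient_opt_of_lt => // [a b ha hb | s Hs].
    by rewrite !(valueC hi); apply: obedient_best.
  by case: ltgtP => // h; [case: Hnlt | case: Hne]; exists s.
by exists s => // a b ha hb; rewrite !(worstC lo); apply: s_opt.
Qed.

End ExperimentSet.

End Payoff.

Section TwoByTwo.
Variables (R : realType) (Om A : finType) (w0 w1 : Om) (a0 a1 : A).
Hypotheses (w01 : w0 != w1) (Om_cover : forall w, w = w0 \/ w = w1).
Hypotheses (a01 : a0 != a1) (A_cover : forall a, a = a0 \/ a = a1).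
Variables (P : set (Om -> R)) (ur : A -> Om -> R).
Hypotheses (P0 : P !=set0) (P_dist : forall p, P p -> is_dist p).

Let pay := payoff (ur a0 w0) (ur a1 w0) (ur a0 w1) (ur a1 w1).
Let lo := inf [set p w1 | p in P].
Let hi := sup [set p w1 | p in P].

Lemma ur_pE p s tau : is_dist p -> is_experiment s -> is_strategy tau ->
  ur_p ur p s tau = pay (p w1) (s w0 a0) (s w1 a0) (tau a0 a0) (tau a1 a0).
Proof.
move=> p_dist s_exp tau_st.
have [p_w1 _] := is_dist_cover2 w01 Om_cover p_dist.
have s_a1 w := (is_dist_cover2 a01 A_cover (s_exp w)).1.
have tau_a1 m := (is_dist_cover2 a01 A_cover (tau_st m)).1.
rewrite /ur_p !(sum_cover2 w01 Om_cover) !(sum_cover2 a01 A_cover).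
by rewrite /pay /payoff p_w1 !s_a1 !tau_a1; ring.
Qed.

Let prior_w1_in01 p : P p -> 0 <= p w1 <= 1.
Proof. by move=> Hp; exact: (is_dist_cover2 w01 Om_cover (P_dist Hp)).2. Qed.

Let priors_lb : has_lbound [set p w1 | p in P].
Proof. by exists 0 => _ [p Hp <-]; case/andP: (prior_w1_in01 Hp). Qed.

Let priors_ub : has_ubound [set p w1 | p in P].
Proof. by exists 1 => _ [p Hp <-]; case/andP: (prior_w1_in01 Hp). Qed.

Let priors0 : [set p w1 | p in P] !=set0.
Proof. by case: P0 => p Hp; exists (p w1), p. Qed.

Lemma lo_in01 : 0 <= lo <= 1.
Proof.
have [p Hp] := P0; have /andP[_ p_le1] := prior_w1_in01 Hp.
rewrite (le_trans (ge_inf priors_lb (imageP _ Hp))) // andbT.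
by apply: lb_le_inf => // _ [q Hq <-]; case/andP: (prior_w1_in01 Hq).
Qed.

Lemma hi_in01 : 0 <= hi <= 1.
Proof.
have [p Hp] := P0; have /andP[p_ge0 _] := prior_w1_in01 Hp.
rewrite (le_trans p_ge0 (sup_upper_bound (conj priors0 priors_ub) (imageP _ Hp))) /=.
by apply: ge_sup => // _ [q Hq <-]; case/andP: (prior_w1_in01 Hq).
Qed.

Lemma ur_sigmaE s tau : is_experiment s -> is_strategy tau ->
  ur_sigma P ur s tau = worst (ur a0 w0) (ur a1 w0) (ur a0 w1) (ur a1 w1)
    lo hi (s w0 a0) (s w1 a0) (tau a0 a0) (tau a1 a0).
Proof.
move=> s_exp tau_st; rewrite /ur_sigma.
set pay_at := pay ^~ (s w0 a0) ^~ (s w1 a0) ^~ (tau a0 a0) ^~ (tau a1 a0).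
have -> : [set ur_p ur p s tau | p in P] =
    [set pay_at 0 + (pay_at 1 - pay_at 0) * x | x in [set p w1 | p in P]].
  rewrite image_comp; apply: eq_imagel => p Hp.
  by rewrite /= ur_pE //; [exact: payoff_prior_affine | exact: P_dist].
by rewrite inf_affine // /worst /pay_at /pay /= -!payoff_prior_affine.
Qed.

Lemma Ur_SigmaE Sg tau : (forall s, Sg s -> is_experiment s) -> is_strategy tau ->
  Ur_Sigma P ur Sg tau = value (ur a0 w0) (ur a1 w0) (ur a0 w1) (ur a1 w1)
    Sg (fun s => s w0 a0) (fun s => s w1 a0) lo hi (tau a0 a0) (tau a1 a0).
Proof.
move=> Sg_exp tau_st; rewrite /Ur_Sigma /value.
by congr inf; apply: eq_imagel => s Hs; exact: ur_sigmaE (Sg_exp _ Hs) tau_st.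
Qed.

Lemma exists_strategy (a b : R) : 0 <= a <= 1 -> 0 <= b <= 1 ->
  exists tau : A -> A -> R, [/\ is_strategy tau, tau a0 a0 = a & tau a1 a0 = b].
Proof.
move=> ha hb.
pose q (c : R) (a' : A) := if a' == a0 then c else 1 - c.
have q_dist c : 0 <= c <= 1 -> is_dist (q c).
  move=> /andP[c_ge0 c_le1]; split=> [a'|]; first by rewrite /q; case: ifP; lra.
  by rewrite (sum_cover2 a01 A_cover) /q eqxx eq_sym (negbTE a01); ring.
exists (fun m => q (if m == a0 then a else b)).
split=> [m||] /=; first by case: (m == a0); apply: q_dist.
  by rewrite /q !eqxx.
by rewrite eq_sym (negbTE a01) /q eqxx.
Qed.

Lemma exists_experiment_obedient_best (Sg : set (Om -> A -> R)) :
  Sg !=set0 -> (forall s, Sg s -> is_experiment s) ->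
  closed (Sg : set {ptws Om -> {ptws A -> R^o}}) -> convex_fun2_set Sg ->
  BR_Sigma P ur Sg (@obedient R A) ->
  exists2 s, Sg s & BR_sigma P ur s (@obedient R A).
Proof.
move=> Sg0 Sg_exp Sg_closed Sg_convex [_ obedient_best].
have Sg01 s : Sg s -> forall w a, 0 <= s w a <= 1.
  by move=> Hs w; exact: (is_dist_cover2 a01 A_cover (Sg_exp s Hs w)).2.
have ob_a0 : @obedient R A a0 a0 = 1 by rewrite /obedient eqxx.
have ob_a1 : @obedient R A a1 a0 = 0 by rewrite /obedient (negbTE a01).
have value_best a b : 0 <= a <= 1 -> 0 <= b <= 1 ->
    value (ur a0 w0) (ur a1 w0) (ur a0 w1) (ur a1 w1)
      Sg (fun s => s w0 a0) (fun s => s w1 a0) lo hi a b <=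
    value (ur a0 w0) (ur a1 w0) (ur a0 w1) (ur a1 w1)
      Sg (fun s => s w0 a0) (fun s => s w1 a0) lo hi 1 0.
  move=> ha hb; have [tau [tau_st <- <-]] := exists_strategy ha hb.
  have := obedient_best tau tau_st.
  by rewrite !Ur_SigmaE //; [rewrite ob_a0 ob_a1 | exact: obedient_strategy].
have [s Hs s_opt] := exists_obedient_best Sg0 (fun s Hs => Sg01 s Hs w0 a0)
  (fun s Hs => Sg01 s Hs w1 a0)
  (fun s1 s2 H1 H2 t ht => ex_intro2 _ _ _ (Sg_convex s1 s2 H1 H2 t ht) (conj erefl erefl))
  (experiments_argmin Sg0 Sg01 Sg_closed w0 w1 a0) lo_in01 hi_in01 value_best.
exists s => //; split=> [|tau tau_st]; first exact: obedient_strategy.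
have s_exp := Sg_exp s Hs.
rewrite !ur_sigmaE //; last exact: obedient_strategy.
rewrite ob_a0 ob_a1; apply: s_opt.
- exact: (is_dist_cover2 a01 A_cover (tau_st a0)).2.
- exact: (is_dist_cover2 a01 A_cover (tau_st a1)).2.
Qed.

End TwoByTwo.

Theorem mainTheorem4 (R : realType) (Om A : finType)
  (P : set (Om -> R)) (ur : A -> Om -> R) (Sg : set (Om -> A -> R)) :
  #|Om| = 2%N -> #|A| = 2%N ->
  (* shared priors: nonempty closed convex subset of Delta(Omega) *)
  P !=set0 -> (forall p, P p -> is_dist p) ->
  closed (P : set {ptws Om -> R^o}) -> convex_fun_set P ->
  (* canonical ambiguous experiment: nonempty closed convex set of experiments *)
  Sg !=set0 -> (forall s, Sg s -> is_experiment s) ->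
  closed (Sg : set {ptws Om -> {ptws A -> R^o}}) -> convex_fun2_set Sg ->
  BR_Sigma P ur Sg (@obedient R A) ->
  exists2 s, Sg s & BR_sigma P ur s (@obedient R A).
Proof.
move=> Om2 A2 P0 P_dist _ _ Sg0 Sg_exp Sg_closed Sg_convex obedient_best.
have [w0 [w1 [w01 Om_cover]]] := card2_cover Om2.
have [a0 [a1 [a01 A_cover]]] := card2_cover A2.
exact: (exists_experiment_obedient_best (ur := ur) w01 Om_cover a01 A_cover
  P0 P_dist Sg0 Sg_exp Sg_closed Sg_convex obedient_best).
Qed.
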